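(* Let $\{A_t:\ t\in T_1\cup T_2\}$ be a family of nonempty subsets of $X$ (or of $X^*$), where $T_1,T_2$ are disjoint nonempty index sets. Then for every $m>0$, \[ \Big[\overline{\operatorname{co}}\Big(\bigcup_{t\in T_1\cup T_2}A_t\Big)\Big]_\infty=\Big[\overline{\operatorname{co}}\Big(\Big(\bigcup_{t\in T_1}A_t\Big)\cup\Big(\bigcup_{t\in T_2}mA_t\Big)\Big)\Big]_\infty=\Big[\overline{\operatorname{co}}\Big(\bigcup_{t_1\in T_1,\,t_2\in T_2}(A_{t_1}+mA_{t_2})\Big)\Big]_\infty . \]
   Context: $X$ is a real separated locally convex space with dual $X^*$ carrying the weak$^*$ topology (closures in $X^*$ are weak$^*$-closures). $\overline{\operatorname{co}}$ denotes the closed convex hull, $+$ the Minkowski sum, and $mA=\{ma: a\in A\}$. For a nonempty closed convex set $C$, its recession cone is $C_\infty:=\{y:\ z+\lambda y\in C\text{ for some } z\in C \text{ and all }\lambda\ge 0\}$. *)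

From HB Require Import structures.
From mathcomp Require Import all_boot all_order all_algebra.
From mathcomp Require Import all_classical all_reals all_analysis.
Set Implicit Arguments. Unset Strict Implicit. Unset Printing Implicit Defensive.
Import Order.TTheory GRing.Theory Num.Theory.
Local Open Scope classical_set_scope.
Local Open Scope ring_scope.

Definition clconv (R : realType) (X : tvsType R) (A : set X) : set X :=
  \bigcap_(C in [set C : set X | convex_set (C : set (convex_lmodType X))
                                  /\ closed C /\ A `<=` C]) C.

Definition rec_cone (R : realType) (X : tvsType R) (C : set X) : set X :=
  [set y | exists2 z, C z & forall l : R, 0 <= l -> C (z + l *: y)].

Definition mink_sum (R : realType) (X : tvsType R) (A B : set X) : set X :=
  [set z | exists2 a, A a & exists2 b, B b & z = a + b].
Definition sscale (R : realType) (X : tvsType R) (m : R) (A : set X) : set X :=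
  [set z | exists2 a, A a & z = m *: a].

(* Main tool ([rec_cone_sub_of_segment]): if every point p of S1, dilated by a
   fixed k > 0, lies in D2 = clconv S2 after a translation taken from a fixed
   segment [c, c + w], then every recession direction y of clconv S1 is one
   of D2.  Indeed clconv S1 lies in the closure of the convex set of such p;
   pulling a far point x + (t / (k mu)) y of that closure towards a base point
   d0 in D2 with weight mu lands within mu *: [0, w] of D2, near the point
   d0 + t y + mu (k x + c - d0); letting mu tend to 0 and using that D2 is
   closed gives d0 + t y in D2 ([closed_thickening_limit]).

   Each equality of the theorem is two instances of this transfer, for the
   union P u Q versus P u mQ ([rec_cone_union_scale], dilating by min m 1)
   and versus the Minkowski sum P + Q ([rec_cone_union_sum]); the theorem
   follows once the indexed unions are rewritten as unions, scalings and sums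
   of the two partial unions. *)
From HB Require Import structures.
From mathcomp Require Import all_boot all_order all_algebra.
From mathcomp Require Import all_classical all_reals all_analysis.
From mathcomp Require Import lra.
Import Order.TTheory GRing.Theory Num.Theory.
Import numFieldNormedType.Exports.
Set Implicit Arguments. Unset Strict Implicit. Unset Printing Implicit Defensive.
Set Bullet Behavior "Strict Subproofs".
Local Open Scope classical_set_scope.
Local Open Scope ring_scope.

Section ClosedConvexHull.
Context (R : realType) (X : tvsType R).

Lemma convex_setP (C : set X) :
  convex_set (C : set (convex_lmodType X)) <->
  (forall a b (l : R), 0 <= l -> l <= 1 -> C a -> C b -> C (l *: a + (1 - l) *: b)).
Proof.
split=> [cC a b l l0 l1 Ca Cb | cC a b l].
- by move: (cC a b (Itv01 l0 l1)); rewrite !in_setE; apply.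
- by rewrite !in_setE => Ca Cb; exact: cC (ge0 _) (le1 _) Ca Cb.
Qed.

Lemma clconv_closed (S : set X) : closed (clconv S).
Proof. by apply: closed_bigI => C [_ []]. Qed.

Lemma clconv_sub (S : set X) : S `<=` clconv S.
Proof. by move=> a Sa C [_ [_ SC]]; exact: SC. Qed.

Lemma clconv_convex (S : set X) :
  convex_set (clconv S : set (convex_lmodType X)).
Proof.
move=> a b l; rewrite !in_setE => Sa Sb C SC.
by have := SC.1 a b l; rewrite !in_setE; apply; [exact: Sa | exact: Sb].
Qed.

Lemma clconv_min (S F : set X) :
  convex_set (F : set (convex_lmodType X)) -> closed F -> S `<=` F ->
  clconv S `<=` F.
Proof. by move=> cF clF SF a; apply. Qed.

Lemma clconv_conv (S : set X) (a b : X) (l : R) : 0 <= l -> l <= 1 ->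
  S a -> S b -> clconv S (l *: a + (1 - l) *: b).
Proof.
move=> l0 l1 /clconv_sub Sa /clconv_sub Sb.
by have /convex_setP := clconv_convex (S := S); apply.
Qed.

End ClosedConvexHull.

Lemma closure_image (T U : topologicalType) (f : T -> U) (A : set T) (x : T) :
  {for x, continuous f} -> closure A x -> closure (f @` A) (f x).
Proof.
move=> fx Ax N /fx /Ax [p [Ap Np]].
by exists (f p); split; [exists p|].
Qed.

Section TvsContinuity.
Context (R : realType) (X : tvsType R).

Lemma tvs_cvgD (T : Type) (F : set_system T) {FF : ProperFilter F}
    (f g : T -> X) (a b : X) :
  f @ F --> a -> g @ F --> b -> (fun t => f t + g t) @ F --> a + b.
Proof.
by move=> fa gb; exact: (cvg_comp _ _ (cvg_pair fa gb) (add_continuous (a, b))).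
Qed.

Lemma tvs_cvgZ (T : Type) (F : set_system T) {FF : ProperFilter F}
    (s : T -> R) (f : T -> X) (k : R) (a : X) :
  s @ F --> k -> f @ F --> a -> (fun t => s t *: f t) @ F --> k *: a.
Proof.
move=> sk fa.
exact: (cvg_comp _ _ (@cvg_pair _ R^o _ _ _ _ _ _ _ _ _ sk fa) (scale_continuous (k, a))).
Qed.

Lemma affine_continuous (a : X) (s : R) : continuous (fun p : X => a + s *: p).
Proof.
move=> p; apply: tvs_cvgD; first exact: cvg_cst.
by apply: tvs_cvgZ; [exact: cvg_cst | exact: cvg_id].
Qed.

Lemma cvg_line (z v : X) : (fun mu : R => z + mu *: v) @ (0 : R) --> z.
Proof.
rewrite -[X in _ --> X]addr0 -(scale0r v).
apply: (@tvs_cvgD _ _ (nbhs_pfilter (0 : R))); first exact: cvg_cst.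
by apply: (@tvs_cvgZ _ _ (nbhs_pfilter (0 : R))); [exact: cvg_id | exact: cvg_cst].
Qed.

Lemma closure_convex (F : set X) :
  convex_set (F : set (convex_lmodType X)) ->
  convex_set (closure F : set (convex_lmodType X)).
Proof.
move=> /convex_setP cF; apply/convex_setP => a b l l0 l1 Fa Fb N.
pose comb := fun q : X * X => l *: q.1 + (1 - l) *: q.2.
have comb_cont : comb @ (a, b) --> comb (a, b).
  by apply: tvs_cvgD; apply: tvs_cvgZ;
    [exact: cvg_cst | exact: cvg_fst | exact: cvg_cst | exact: cvg_snd].
move=> /comb_cont [[U V] /= [Ua Vb] UVN].
have [p [Fp Up]] := Fa U Ua.
have [q [Fq Vq]] := Fb V Vb.
by exists (comb (p, q)); split; [exact: cF | exact: (UVN (p, q))].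
Qed.

End TvsContinuity.

Section RecessionCone.
Context (R : realType) (X : tvsType R).

Definition segment_preimage (D : set X) (k : R) (c w : X) : set X :=
  [set p | exists2 al : R, 0 <= al <= 1 & D (k *: p + c + al *: w)].

Definition thickening (D : set X) (w : X) (mu : R) : set X :=
  [set q | exists2 b : R, 0 <= b <= mu & D (q + b *: w)].

Lemma segment_preimage_convex (D : set X) (k : R) (c w : X) :
  convex_set (D : set (convex_lmodType X)) ->
  convex_set (segment_preimage D k c w : set (convex_lmodType X)).
Proof.
move=> /convex_setP cD; apply/convex_setP.
move=> a b l l0 l1 [al /andP[al0 al1] Da] [be /andP[be0 be1] Db].
exists (l * al + (1 - l) * be).
  have l0' : 0 <= 1 - l by rewrite subr_ge0.
  rewrite addr_ge0 ?mulr_ge0 //=.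
  apply: le_trans (lerD (ler_wpM2l l0 al1) (ler_wpM2l l0' be1)) _.
  by rewrite !mulr1 addrC subrK.
suff <- : l *: (k *: a + c + al *: w) + (1 - l) *: (k *: b + c + be *: w)
    = k *: (l *: a + (1 - l) *: b) + c + (l * al + (1 - l) * be) *: w.
  exact: cD.
have splitc : c = l *: c + (1 - l) *: c by rewrite -scalerDl addrC subrK scale1r.
rewrite [in RHS]splitc !scalerDr !scalerA [(l * al + _) *: w]scalerDl.
rewrite [k * l]mulrC [k * (1 - l)]mulrC.
set A := (l * k) *: a; set B := ((1 - l) * k) *: b.
set W1 := (l * al) *: w; set W2 := ((1 - l) * be) *: w.
rewrite -!addrA; congr (_ + _).
by rewrite [W1 + _]addrCA [W1 + _]addrCA addrCA.
Qed.

Lemma segment_preimage_contract (D : set X) (k mu : R) (c w d0 p : X) :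
  convex_set (D : set (convex_lmodType X)) -> D d0 -> 0 <= mu <= 1 ->
  segment_preimage D k c w p ->
  thickening D w mu ((1 - mu) *: d0 + mu *: c + (mu * k) *: p).
Proof.
move=> /convex_setP cD Dd0 /andP[mu0 mu1] [al /andP[al0 al1] Dp].
exists (mu * al); first by rewrite mulr_ge0 //= ler_piMr.
suff <- : mu *: (k *: p + c + al *: w) + (1 - mu) *: d0
    = (1 - mu) *: d0 + mu *: c + (mu * k) *: p + (mu * al) *: w.
  exact: cD.
rewrite !scalerDr !scalerA.
set D0 := (1 - mu) *: d0; set C := mu *: c; set K := (mu * k) *: p.
set W := (mu * al) *: w.
rewrite -!addrA (addrC W D0) (addrCA C D0 W) (addrCA K D0 (C + W)); congr (_ + _).
by rewrite (addrCA K C W).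
Qed.

Lemma closed_thickening_limit (D : set X) (z v w : X) : closed D ->
  (forall mu : R, 0 < mu -> mu <= 1 -> closure (thickening D w mu) (z + mu *: v)) ->
  D z.
Proof.
move=> clD near_z; rewrite (closure_id D).1 // => N Nz.
have := @add_continuous X (z, 0) N; rewrite /= addr0 => /(_ Nz).
case=> [[U V] /= [Uz V0] UVN].
have Uline : \forall mu \near (0 : R), U° (z + mu *: v).
  exact: cvg_line (nbhs_interior Uz).
have Vline : \forall b \near (0 : R), V (b *: w).
  have := cvg_line (z := 0) w V0.
  by apply: (@filterS _ _ (nbhs_filter (0 : R))) => b /=; rewrite add0r.
have [e /= e0 near0] := (@nbhs_norm0P _ R^o _).1 (filterI Uline Vline).
have [mu [mu0 mue mu1]] : exists mu : R, [/\ 0 < mu, mu < e & mu <= 1].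
  by case: (leP e 1) => e1; [exists (e / 2) | exists (1 / 2)]; split; lra.
have [Umu _] : U° (z + mu *: v) /\ V (mu *: w).
  by apply: near0; rewrite /= gtr0_norm.
have Unbhs : nbhs (z + mu *: v) U° by move: (open_interior U); rewrite openE; apply.
have [q [[b /andP[b0 bmu] Dqb] Uq]] := near_z mu mu0 mu1 _ Unbhs.
exists (q + b *: w); split => //.
apply: (UVN (q, b *: w)); split; first exact: interior_subset.
suff [] : U° (z + b *: v) /\ V (b *: w) by [].
by apply: near0; rewrite /= ger0_norm //; apply: le_lt_trans mue.
Qed.

Lemma rec_cone_sub_of_segment (S1 S2 : set X) (k : R) (c w : X) :
  0 < k -> S2 !=set0 -> S1 `<=` segment_preimage (clconv S2) k c w ->
  rec_cone (clconv S1) `<=` rec_cone (clconv S2).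
Proof.
move=> k0 [d0 S2d0] S1F y [x _ xy].
have Dd0 : clconv S2 d0 by exact: clconv_sub.
have D1F : clconv S1 `<=` closure (segment_preimage (clconv S2) k c w).
  apply: clconv_min; last by move=> p /S1F /subset_closure.
    exact/closure_convex/segment_preimage_convex/clconv_convex.
  exact: closed_closure.
exists d0 => // t; rewrite le_eqVlt => /predU1P[<- | t0].
  by rewrite scale0r addr0.
apply: (closed_thickening_limit (v := k *: x + c - d0) (w := w)).
  exact: clconv_closed.
move=> mu mu0 mu1.
pose H (p : X) := (1 - mu) *: d0 + mu *: c + (mu * k) *: p.
pose lam := t / (k * mu).
have <- : H (x + lam *: y) = d0 + t *: y + mu *: (k *: x + c - d0).
  have kmu : mu * k * lam = t.
    by rewrite /lam mulrC [k * mu]mulrC divfK ?gt_eqF ?mulr_gt0.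
  rewrite /H scalerBl scale1r !scalerDr !scalerA kmu scalerN.
  set D0 := mu *: d0; set C := mu *: c; set K := (mu * k) *: x; set T := t *: y.
  rewrite -!addrA; congr (_ + _).
  rewrite (addrC K T) (addrCA C T K) (addrCA (- D0) T (C + K)); congr (_ + _).
  by rewrite (addrC (- D0)) -addrA (addrCA C K).
have lam0 : 0 <= lam by rewrite divr_ge0 ?mulr_ge0 ?ltW.
have Hcont : continuous H :=
  affine_continuous (a := (1 - mu) *: d0 + mu *: c) (s := mu * k).
have := closure_image (Hcont _) (D1F _ (xy lam lam0)).
apply: closureS => _ [p Fp <-].
apply: segment_preimage_contract => //; first exact: clconv_convex.
by rewrite ltW.
Qed.

End RecessionCone.

Section SetOperations.
Context (R : realType) (X : tvsType R).

Lemma sscaleK (m : R) (Q : set X) : m != 0 -> sscale m^-1 (sscale m Q) = Q.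
Proof.
move=> m0; apply/seteqP; split => [_ [_ [q Qq ->] ->] | q Qq].
  by rewrite scalerA mulVf // scale1r.
by exists (m *: q); [exists q | rewrite scalerA mulVf // scale1r].
Qed.

Lemma sscale_bigcup (I : Type) (T : set I) (m : R) (A : I -> set X) :
  sscale m (\bigcup_(t in T) A t) = \bigcup_(t in T) sscale m (A t).
Proof.
apply/seteqP; split => [_ [a [t Tt Aa] ->] | _ [t Tt [a Aa ->]]].
  by exists t => //; exists a.
by exists a => //; exists t.
Qed.

Lemma mink_sum_bigcup (I J : Type) (T1 : set I) (T2 : set J)
    (P : I -> set X) (Q : J -> set X) :
  \bigcup_(i in T1) \bigcup_(j in T2) mink_sum (P i) (Q j)
  = mink_sum (\bigcup_(i in T1) P i) (\bigcup_(j in T2) Q j).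
Proof.
apply/seteqP; split => [_ [i Ti [j Tj [a Pa [b Qb ->]]]] | _ [a [i Ti Pa] [b [j Tj Qb] ->]]].
  by exists a; [exists i | exists b => //; exists j].
by exists i => //; exists j => //; exists a => //; exists b.
Qed.

End SetOperations.

Section RecessionOfUnions.
Context (R : realType) (X : tvsType R).
Implicit Types (P Q : set X) (m : R).

(* Rescaling one part of a union by [m > 0] keeps the recession cone of the
   closed convex hull: dilate by [min m 1] and translate towards [a0 \in P]. *)
Lemma rec_cone_union_scale_sub P Q m : 0 < m -> P !=set0 ->
  rec_cone (clconv (P `|` Q)) `<=` rec_cone (clconv (P `|` sscale m Q)).
Proof.
move=> m0 [a0 Pa0]; set k := Num.min m 1.
have k0 : 0 < k by rewrite lt_min m0 ltr01.
have k1 : k <= 1 by rewrite ge_min lexx orbT.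
have km : k / m <= 1 by rewrite ler_pdivrMr // mul1r ge_min lexx.
apply: (rec_cone_sub_of_segment (k := k) (c := 0) (w := a0)) => //.
  by exists a0; left.
move=> p [Pp | Qp].
  exists (1 - k); first by rewrite subr_ge0 k1 lerBlDr lerDl ltW.
  by rewrite addr0; apply: clconv_conv => //; [exact: ltW | left | left].
exists (1 - k / m); first by rewrite subr_ge0 km lerBlDr lerDl divr_ge0 ?ltW.
have -> : k *: p = (k / m) *: (m *: p) by rewrite scalerA divfK ?gt_eqF.
rewrite addr0; apply: clconv_conv => //; first by rewrite divr_ge0 ?ltW.
  by right; exists p.
by left.
Qed.

Lemma rec_cone_union_scale P Q m : 0 < m -> P !=set0 ->
  rec_cone (clconv (P `|` Q)) = rec_cone (clconv (P `|` sscale m Q)).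
Proof.
move=> m0 P0; apply/seteqP; split; first exact: rec_cone_union_scale_sub.
rewrite -[in X in _ `<=` X](sscaleK Q (lt0r_neq0 m0)).
by apply: rec_cone_union_scale_sub; rewrite ?invr_gt0.
Qed.

Lemma rec_cone_union_sum P Q : P !=set0 -> Q !=set0 ->
  rec_cone (clconv (P `|` Q)) = rec_cone (clconv (mink_sum P Q)).
Proof.
move=> [a0 Pa0] [b0 Qb0]; apply/seteqP; split.
- apply: (rec_cone_sub_of_segment (k := 1) (c := b0) (w := a0 - b0)) => //.
    by exists (a0 + b0); exists a0 => //; exists b0.
  move=> p [Pp | Qp].
    exists 0; first by rewrite lexx ler01.
    by rewrite scale1r scale0r addr0; apply: clconv_sub; exists p => //; exists b0.
  exists 1; first by rewrite lexx ler01.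
  rewrite !scale1r addrC addrCA subrK addrC; apply: clconv_sub.
  by exists a0 => //; exists p.
- have half0 : (0 : R) < 2^-1 by rewrite invr_gt0 ltr0n.
  apply: (rec_cone_sub_of_segment (k := 2^-1) (c := 0) (w := 0)) => //.
    by exists a0; left.
  move=> _ [a Pa [b Qb ->]].
  exists 0; first by rewrite lexx ler01.
  have half : (2^-1 : R) = 1 - 2^-1 by lra.
  rewrite scale0r !addr0 scalerDr {2}half.
  by apply: clconv_conv; [exact: ltW | rewrite half gerBl ltW | left | right].
Qed.

End RecessionOfUnions.

Theorem lemma3 (R : realType) (X : tvsType R) (hX : hausdorff_space X)
  (I : Type) (T1 T2 : set I) (A : I -> set X)
  (hdisj : T1 `&` T2 = set0) (hT1 : T1 !=set0) (hT2 : T2 !=set0)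
  (hA : forall t, (T1 `|` T2) t -> A t !=set0)
  (m : R) (hm : 0 < m) :
  rec_cone (clconv (\bigcup_(t in T1 `|` T2) A t))
  = rec_cone (clconv ((\bigcup_(t in T1) A t)
                      `|` (\bigcup_(t in T2) sscale m (A t))))
  /\
  rec_cone (clconv ((\bigcup_(t in T1) A t)
                      `|` (\bigcup_(t in T2) sscale m (A t))))
  = rec_cone (clconv (\bigcup_(t1 in T1) \bigcup_(t2 in T2)
                        mink_sum (A t1) (sscale m (A t2)))).
Proof.
have nonempty_union (T : set I) : T !=set0 -> T `<=` T1 `|` T2 ->
    \bigcup_(t in T) A t !=set0.
  by move=> [t Tt] TT12; have [a Aa] := hA t (TT12 t Tt); exists a, t.
have A1_0 := nonempty_union T1 hT1 (@subsetUl _ T1 T2).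
have [b Bb] := nonempty_union T2 hT2 (@subsetUr _ T1 T2).
rewrite bigcup_setU mink_sum_bigcup -sscale_bigcup.
split; first exact: rec_cone_union_scale.
by apply: rec_cone_union_sum => //; exists (m *: b), b.
Qed.
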